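(* An SVN $\mathfrak{g}$ with sufficient storage and sufficient budget under the Single-Objective Framework is bilaterally stable if and only if every agent has backup partnerships with all other agents, i.e. $\mathfrak{g}$ is the complete network.
   Context: $\mathfrak{g}$ is a simple undirected graph on $N$ agents, and $\eta_i(\mathfrak{g})$ is the degree of $i$. The utility is $u_i(\mathfrak{g})=\beta(1-\lambda^{\eta_i(\mathfrak{g})})$ with $\beta,\lambda\in(0,1)$. Sufficient resources means: - agent $i$'s storage $s_i$ satisfies $s_i\ge\sum_{j\ne i}d_j$, where $d_j$ is agent $j$'s data size; - budget $b_i\ge c(N-1)$, where $c$ is the per-link cost. Remaining storage is $RS_i=s_i-\sum_{j\text{ neighbour of }i}d_j$ and remaining budget is $RB_i=b_i-c\,\eta_i(\mathfrak{g})$. $\mathfrak{g}$ is bilaterally stable if both of the following hold. 1. For every link $\langle ij\rangle$: if $u_i(\mathfrak{g}-\langle ij\rangle)>u_i(\mathfrak{g})$, then $u_j(\mathfrak{g}-\langle ij\rangle)<u_j(\mathfrak{g})$. 2. For every non-link $\langle ij\rangle$: if $u_i(\mathfrak{g}+\langle ij\rangle)>u_i(\mathfrak{g})$ and $RS_j\ge d_i$ and $RB_i\ge c$, then $u_j(\mathfrak{g}+\langle ij\rangle)<u_j(\mathfrak{g})$ or $RS_i<d_j$ or $RB_j<c$. *)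

From mathcomp Require Import all_boot all_order all_algebra.
Set Implicit Arguments. Unset Strict Implicit. Unset Printing Implicit Defensive.
Import Order.TTheory GRing.Theory Num.Theory.
Local Open Scope ring_scope.

(* Agents are the elements of a finite type T (N = #|T|).
   A network is a simple undirected graph, i.e. a symmetric irreflexive
   boolean relation on T. *)

Definition simple_graph (T : finType) (g : rel T) : Prop :=
  (forall i, ~~ g i i) /\ (forall i j, g i j = g j i).

Definition deg (T : finType) (g : rel T) (i : T) : nat := #|[pred j | g i j]|.

Definition add_link (T : finType) (g : rel T) (i j : T) : rel T :=
  fun x y => g x y || ((x == i) && (y == j)) || ((x == j) && (y == i)).
Definition del_link (T : finType) (g : rel T) (i j : T) : rel T :=
  fun x y => g x y && ~~ (((x == i) && (y == j)) || ((x == j) && (y == i))).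

Definition utility (R : realFieldType) (beta lambda : R) (T : finType)
  (g : rel T) (i : T) : R := beta * (1 - lambda ^+ deg g i).

Definition RS (R : realFieldType) (T : finType) (s d : T -> R) (g : rel T)
  (i : T) : R := s i - \sum_(j | g i j) d j.
Definition RB (R : realFieldType) (T : finType) (b : T -> R) (c : R)
  (g : rel T) (i : T) : R := b i - c * (deg g i)%:R.

Definition sufficient_storage (R : realFieldType) (T : finType) (s d : T -> R)
  : Prop := forall i, \sum_(j | j != i) d j <= s i.
Definition sufficient_budget (R : realFieldType) (T : finType) (b : T -> R)
  (c : R) : Prop := forall i : T, c * (#|T| - 1)%N%:R <= b i.

Definition bilaterally_stable (R : realFieldType) (beta lambda : R)
  (T : finType) (s d b : T -> R) (c : R) (g : rel T) : Prop :=
  let u := @utility R beta lambda T in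
  (forall i j, g i j ->
     u (del_link g i j) i > u g i -> u (del_link g i j) j < u g j) /\
  (forall i j, i != j -> ~~ g i j ->
     (u (add_link g i j) i > u g i /\ RS s d g j >= d i /\ RB b c g i >= c) ->
     (u (add_link g i j) j < u g j \/ RS s d g i < d j \/ RB b c g j < c)).

Definition complete_network (T : finType) (g : rel T) : Prop :=
  forall i j : T, i != j -> g i j.

From mathcomp Require Import all_boot all_order all_algebra.
Import Order.TTheory GRing.Theory Num.Theory.
Set Implicit Arguments. Unset Strict Implicit. Unset Printing Implicit Defensive.
Local Open Scope ring_scope.

(* Utility is strictly increasing in the degree, so deleting a link never pays
   and adding a missing link pays for both endpoints.  Sufficient resources
   make every missing link affordable to both endpoints, so any missing link
   is a profitable feasible addition and breaks stability; in the complete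
   network there is nothing to add and no deletion is profitable. *)

Lemma ltr_utility (R : realFieldType) (beta lambda : R) (T : finType)
    (g g' : rel T) (i : T) :
  0 < beta -> 0 < lambda < 1 ->
  (utility beta lambda g i < utility beta lambda g' i) = (deg g i < deg g' i)%N.
Proof.
move=> beta_gt0 /andP[lambda_gt0 lambda_lt1].
by rewrite /utility ltr_pM2l // ltrD2l ltrN2 ltr_iXn2l.
Qed.

Lemma deg_add_linkC (T : finType) (g : rel T) (i j x : T) :
  deg (add_link g i j) x = deg (add_link g j i) x.
Proof. by apply: eq_card => k; rewrite !inE /add_link orbAC. Qed.

Lemma deg_add_link (T : finType) (g : rel T) (i j : T) :
  ~~ g i j -> (deg g i < deg (add_link g i j) i)%N.
Proof.
move=> nij; apply: proper_card; apply/properP; split.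
  by apply/subsetP => k; rewrite !inE /add_link => ->.
by exists j; rewrite !inE /add_link ?eqxx ?orbT.
Qed.

Lemma deg_del_link (T : finType) (g : rel T) (i j x : T) :
  (deg (del_link g i j) x <= deg g x)%N.
Proof.
by apply: subset_leq_card; apply/subsetP => k; rewrite !inE => /andP[].
Qed.

Lemma deg_lt_nonadjacent (T : finType) (g : rel T) (i j : T) :
  (forall x, ~~ g x x) -> i != j -> ~~ g i j -> (deg g i < #|T| - 1)%N.
Proof.
move=> irr ij nij; rewrite subn1 -(cardC1 i); apply: proper_card.
apply/properP; split; last by exists j; rewrite !inE // eq_sym.
apply/subsetP => k; rewrite !inE; apply: contraTneq => ->.
exact: irr.
Qed.

Lemma RB_ge_cost (R : realFieldType) (T : finType) (b : T -> R) (c : R)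
    (g : rel T) (i : T) :
  0 <= c -> sufficient_budget b c -> (deg g i < #|T| - 1)%N -> c <= RB b c g i.
Proof.
move=> c_ge0 budget lt_deg; rewrite /RB lerBrDr (le_trans _ (budget i)) //.
by rewrite -[c in c + _]mulr1 -mulrDr addrC natr1 ler_wpM2l // ler_nat.
Qed.

Lemma RS_ge_size (R : realFieldType) (T : finType) (s d : T -> R) (g : rel T)
    (i j : T) :
  (forall k, 0 <= d k) -> (forall x, ~~ g x x) -> sufficient_storage s d ->
  i != j -> ~~ g i j -> d j <= RS s d g i.
Proof.
move=> d_ge0 irr storage ij nij; rewrite /RS lerBrDr (le_trans _ (storage i)) //.
rewrite [X in _ <= X](bigD1 j) 1?eq_sym //= lerD2l.
rewrite [X in _ <= X](bigID (g i)) /=.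
have -> : \sum_(k | (k != i) && (k != j) && g i k) d k = \sum_(k | g i k) d k.
  apply: eq_bigl => k; case: (boolP (g i k)) => gik; rewrite ?andbF ?andbT //.
  by apply/andP; split; apply: contraTneq gik => ->; rewrite ?irr.
by rewrite lerDl sumr_ge0.
Qed.

Theorem corollary2 (R : realFieldType) (beta lambda : R) (T : finType)
  (s d b : T -> R) (c : R) (g : rel T) :
  0 < beta < 1 -> 0 < lambda < 1 ->
  (forall j, 0 <= d j) -> 0 <= c ->
  simple_graph g ->
  sufficient_storage s d -> sufficient_budget b c ->
  bilaterally_stable beta lambda s d b c g <-> complete_network g.
Proof.
move=> /andP[beta_gt0 _] lambda01 d_ge0 c_ge0 [irr sym] storage budget.
split=> [[_ no_addition] i j ij | complete].
  apply/negPn/negP => nij.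
  have nji : ~~ g j i by rewrite sym.
  have ji : j != i by rewrite eq_sym.
  have gain_i := deg_add_link nij.
  have gain_j : (deg g j < deg (add_link g i j) j)%N.
    by rewrite deg_add_linkC deg_add_link.
  have afford x y : x != y -> ~~ g x y -> d y <= RS s d g x /\ c <= RB b c g x.
    move=> xy nxy; split; first exact: RS_ge_size.
    exact/RB_ge_cost/(deg_lt_nonadjacent irr xy nxy).
  have [RSj RBj] := afford j i ji nji; have [RSi RBi] := afford i j ij nij.
  case: (no_addition i j ij nij); first by rewrite ltr_utility // gain_i.
    by rewrite ltr_utility // ltnNge (ltnW gain_j).
  by case; rewrite ltNge ?RSi ?RBj.
split=> [i j _ | i j ij]; last by rewrite complete.
by rewrite ltr_utility // ltnNge deg_del_link.
Qed.
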